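(* Let $k\ge2$ and let $f$ be a smooth function on $\mathcal E_k$ (depending on finitely many coordinates) such that $D^{(k)}_x(f)=D^{(k)}_y(f)=0$. Then $f$ is constant.
   Context: Let $\mathcal E_1$ be the system $u_y+vu_x=\frac1{v-u}$, $v_y+uv_x=\frac1{u-v}$ with internal coordinates $x,y,u_i=\partial^iu/\partial x^i$, $v_i=\partial^iv/\partial x^i$ ($i\ge0$) and total derivatives $D_x=\partial_x+\sum_i(u_{i+1}\partial_{u_i}+v_{i+1}\partial_{v_i})$, $D_y=\partial_y+\sum_i\big(D_x^i(\tfrac1{v-u}-vu_1)\partial_{u_i}+D_x^i(\tfrac1{u-v}-uv_1)\partial_{v_i}\big)$. Let $\sigma_m=\sum_{i+j=m}u^iv^j$, $\psi^{(1)}=y$, $\psi^{(2)}=x$, and let $\psi^{(k)}$, $k\ge3$, be new coordinates; for $k\ge2$ put $X^{(k)}=\sigma_{k-2}-\sum_{i=1}^{k-3}i\,\sigma_{k-i-3}\psi^{(i)}$ and for $k\ge3$ put $Y^{(k)}=-uv\,X^{(k-1)}-(k-2)\psi^{(k-2)}$. For $k\ge2$, $\mathcal E_k=\mathcal E_1\times\mathbb R^{k-1}$ has the additional coordinates $\psi^{(3)},\dots,\psi^{(k+1)}$ and the commuting vector fields $D^{(k)}_x=D_x+\sum_{i=3}^{k+1}X^{(i)}\partial/\partial\psi^{(i)}$, $D^{(k)}_y=D_y+\sum_{i=3}^{k+1}Y^{(i)}\partial/\partial\psi^{(i)}$. *)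

From HB Require Import structures.
From mathcomp Require Import all_boot all_order all_algebra.
From mathcomp Require Import all_classical all_reals all_analysis.
Set Implicit Arguments. Unset Strict Implicit. Unset Printing Implicit Defensive.
Import Order.TTheory GRing.Theory Num.Theory.
Import numFieldNormedType.Exports.
Local Open Scope classical_set_scope.
Local Open Scope ring_scope.

Section Jets.
Variable R : realType.

(* A point of the infinite-dimensional space E_1 x R^infty:
   internal coordinates x, y, u_i, v_i (i >= 0) and the nonlocal
   coordinates psi^(j), stored in jpsi j for j >= 3
   (jpsi j for j < 3 is an unused dummy). *)
Record jet := mkJet {
  jx : R; jy : R; ju : nat -> R; jv : nat -> R; jpsi : nat -> R }.

Definition jline (p w : jet) (t : R) : jet :=
  mkJet (jx p + t * jx w) (jy p + t * jy w)
        (fun i => ju p i + t * ju w i) (fun i => jv p i + t * jv w i)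
        (fun j => jpsi p j + t * jpsi w j).

Definition vfield (w : jet -> jet) (h : jet -> R) : jet -> R :=
  fun p => derive1 (fun t => h (jline p (w p) t)) 0.

Definition psi (p : jet) (j : nat) : R :=
  if j == 1%N then jy p else if j == 2%N then jx p else jpsi p j.

Definition sigma (p : jet) (m : nat) : R :=
  \sum_(0 <= i < m.+1) ju p 0 ^+ i * jv p 0 ^+ (m - i).

Definition Xc (k : nat) (p : jet) : R :=
  sigma p (k - 2) - \sum_(1 <= i < k - 2) (i%:R * sigma p (k - i - 3) * psi p i).

Definition Yc (k : nat) (p : jet) : R :=
  - (ju p 0 * jv p 0) * Xc k.-1 p - (k - 2)%:R * psi p (k - 2).

Definition Wx1 (p : jet) : jet :=
  mkJet 1 0 (fun i => ju p i.+1) (fun i => jv p i.+1) (fun _ => 0).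
Definition Dx1 (h : jet -> R) : jet -> R := vfield Wx1 h.

(* right-hand sides of the system *)
Definition rhsU (p : jet) : R := 1 / (jv p 0 - ju p 0) - jv p 0 * ju p 1.
Definition rhsV (p : jet) : R := 1 / (ju p 0 - jv p 0) - ju p 0 * jv p 1.

Definition Fu (i : nat) : jet -> R := iter i Dx1 rhsU.
Definition Fv (i : nat) : jet -> R := iter i Dx1 rhsV.

Definition in_psi_range (k j : nat) : bool := (3 <= j <= k.+1)%N.

Definition Wxk (k : nat) (p : jet) : jet :=
  mkJet 1 0 (fun i => ju p i.+1) (fun i => jv p i.+1)
        (fun j => if in_psi_range k j then Xc j p else 0).
Definition Wyk (k : nat) (p : jet) : jet :=
  mkJet 0 1 (fun i => Fu i p) (fun i => Fv i p)
        (fun j => if in_psi_range k j then Yc j p else 0).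

Definition Dxk (k : nat) (h : jet -> R) : jet -> R := vfield (Wxk k) h.
Definition Dyk (k : nat) (h : jet -> R) : jet -> R := vfield (Wyk k) h.

(* the finitely many coordinates of E_k up to jet order N:
   x, y, u_0..u_N, v_0..v_N, psi^(3)..psi^(k+1) *)
Definition ncoord (k N : nat) : nat := (2 + N.+1 + N.+1 + k.-1)%N.

Definition coord (k N : nat) (p : jet) (i : nat) : R :=
  if i == 0%N then jx p
  else if i == 1%N then jy p
  else if (i < 2 + N.+1)%N then ju p (i - 2)
  else if (i < 2 + N.+1 + N.+1)%N then jv p (i - 2 - N.+1)
  else jpsi p (i - (2 + N.+1 + N.+1) + 3).

Definition jproj (k N : nat) (p : jet) : 'rV[R]_(ncoord k N) :=
  \row_(i < ncoord k N) coord k N p i.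

Definition u0_of (k N : nat) (z : 'rV[R]_(ncoord k N)) : R :=
  z ord0 (@inord (ncoord k N).-1 2).
Definition v0_of (k N : nat) (z : 'rV[R]_(ncoord k N)) : R :=
  z ord0 (@inord (ncoord k N).-1 (2 + N.+1)).

End Jets.

Fixpoint iterD {R : realType} {m : nat} (vs : seq 'rV[R]_m)
    (g : 'rV[R]_m -> R) : 'rV[R]_m -> R :=
  match vs with
  | [::] => g
  | v :: vs' => fun z => derive (iterD vs' g) z v
  end.

Definition smooth_on {R : realType} {m : nat} (U : set 'rV[R]_m)
    (g : 'rV[R]_m -> R) : Prop :=
  forall (vs : seq 'rV[R]_m) (z : 'rV[R]_m), U z -> differentiable (iterD vs g) z.

Arguments jproj {R} k N p.
Arguments u0_of {R} k N z.
Arguments v0_of {R} k N z.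
Arguments Dxk {R} k h.
Arguments Dyk {R} k h.

From Pilot Require Import Defs.
From HB Require Import structures.
From mathcomp Require Import all_boot all_order all_algebra.
From mathcomp Require Import all_classical all_reals all_analysis.
From mathcomp Require Import zify.
Import Order.TTheory GRing.Theory Num.Theory.
Import numFieldNormedType.Exports.
Local Open Scope classical_set_scope.
Local Open Scope ring_scope.
Set Implicit Arguments. Unset Strict Implicit.

(* In the coordinates (x, y, u_0..u_N, v_0..v_N, psi^(3)..psi^(k+1)) of E_k, the
   equation D_x g = 0 says that the differential of g annihilates the row
   (1, 0, u_1..u_N, u_(N+1), v_1..v_N, v_(N+1), X^(3)..X^(k+1)) at every jet.
   As u_(N+1) and v_(N+1) are free, g_(u_N) = g_(v_N) = 0.  If g_(u_(c+1))
   vanishes on U, then g and its differential are locally invariant under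
   shifts of u_(c+1), while such a shift adds s e_(u_c) to the row; hence
   g_(u_c) = 0, and descending induction kills all partials in the u_i, v_i.
   Then shifting u_0 by s turns D_x g = 0 into a polynomial identity in s
   whose coefficients X^(j+3)(u_0 + s) are monic of degree j + 1; this
   triangular system forces g_x = g_(psi^(j)) = 0.  Finally D_y g = g_y = 0, so
   dg = 0 on the connected open set U. *)

Section ConstantOnConnected.
Variables (R : realType) (V : normedModType R).
Implicit Types (U : set V) (g : V -> R) (y z e w : V).

Lemma line_quotientE g z e t :
  (fun h : R => h^-1 *: (((fun s => g (z + s *: e)) \o shift t) (h *: 1)
                          - g (z + t *: e))) =
  (fun h : R => h^-1 *: ((g \o shift (z + t *: e)) (h *: e) - g (z + t *: e))).
Proof.
by apply: funext => h /=; rewrite /shift /= -[h%:A]/(h * 1) mulr1 scalerDl addrCA.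
Qed.

Lemma derive_line g z e t :
  'D_1 (fun s : R => g (z + s *: e)) t = 'D_e g (z + t *: e).
Proof. by rewrite /derive line_quotientE. Qed.

Lemma derivable_line g z e t :
  derivable g (z + t *: e) e -> derivable (fun s : R => g (z + s *: e)) t 1.
Proof. by rewrite /derivable line_quotientE. Qed.

Lemma segment_cst U g z e :
  (forall y, U y -> differentiable g y) -> (forall y, U y -> 'd g y e = 0) ->
  (forall t, 0 <= t <= 1 -> U (z + t *: e)) -> g (z + e) = g z.
Proof.
move=> dg de Ue; pose phi s := g (z + s *: e).
have dphi t : 0 <= t <= 1 -> derivable phi t 1.
  by move=> /Ue /dg /diff_derivable d; exact: derivable_line (d e).
have phi'0 (t : R) : t \in `]0, 1[%R -> is_derive t (1 : R) phi 0.
  rewrite in_itv /= => /andP[t0 t1]; have tI : 0 <= t <= 1 by rewrite !ltW.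
  apply: DeriveDef; first exact: dphi.
  by rewrite /phi derive_line deriveE ?de //; [exact: Ue | exact/dg/Ue].
have phi_cont : {within `[0, 1], continuous phi}.
  apply: continuous_in_subspaceT => t; rewrite inE /= in_itv /= => tI.
  exact/differentiable_continuous/derivable1_diffP/dphi.
have [c _] := MVT_segment ler01 phi'0 phi_cont.
by rewrite /phi mul0r scale1r scale0r addr0 => /eqP; rewrite subr_eq0 => /eqP.
Qed.

Lemma open_ball_norm U z : open U -> U z ->
  exists2 r : R, 0 < r & forall y, `|z - y| < r -> U y.
Proof.
move=> oU Uz; have /nbhs_ballP[r r0 rU] : nbhs z U by apply: open_nbhs_nbhs.
by exists r => // y zy; apply: rU; rewrite -ball_normE.
Qed.

Lemma ball_segment z y e r : `|z - y| + `|e| < r ->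
  forall t, 0 <= t <= 1 -> `|z - (y + t *: e)| < r.
Proof.
move=> zyer t /andP[t0 t1]; rewrite opprD addrA.
apply: le_lt_trans (ler_normB _ _) _; apply: le_lt_trans zyer.
rewrite lerD2l normrZ ger0_norm //.
by rewrite -[leRHS]mul1r ler_wpM2r.
Qed.

Lemma diff_dir0_shift_invariant U g e z : open U ->
  (forall y, U y -> differentiable g y) -> (forall y, U y -> 'd g y e = 0) ->
  U z -> exists2 d : R, 0 < d & forall s, `|s| < d ->
    U (z + s *: e) /\ \forall y \near z, g (y + s *: e) = g y.
Proof.
move=> oU dg de Uz; have [r r0 rU] := open_ball_norm oU Uz.
have r20 : 0 < r / 2 by rewrite divr_gt0.
have e1 : 0 < `|e| + 1 by rewrite ltr_wpDl.
exists (r / 2 / (`|e| + 1)) => [|s]; first by rewrite divr_gt0.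
rewrite ltr_pdivlMr // => sr.
have se : `|s *: e| < r / 2.
  by rewrite normrZ (le_lt_trans _ sr) // ler_wpM2l // lerDl.
split.
  apply: rU; rewrite opprD addrA subrr add0r normrN (lt_trans se) //.
  by rewrite ltr_pdivrMr // ltr_pMr // ltr1n.
near=> y; apply: (segment_cst dg) => [x Ux | t tI].
  by rewrite linearZ /= de // scaler0.
apply/rU/(ball_segment _ tI); rewrite [r]splitr ltrD //.
Unshelve. all: by end_near.
Qed.

Lemma shift_invariant_diff g z a w :
  differentiable g z -> differentiable g (z + a) ->
  (\forall y \near z, g (y + a) = g y) -> 'd g (z + a) w = 'd g z w.
Proof.
move=> dgz dgza ga; rewrite -!deriveE //.
have -> : 'D_w g (z + a) = 'D_w (fun y => g (y + a)) z.
  by rewrite /derive /comp /shift; under eq_fun do rewrite addrA.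
by apply: near_eq_derive; near=> y; rewrite (near ga).
Unshelve. all: by end_near.
Qed.

Lemma diff0_locally_cst U g z : open U ->
  (forall y, U y -> differentiable g y) -> (forall y w, U y -> 'd g y w = 0) ->
  U z -> exists2 r : R, 0 < r & forall y, `|z - y| < r -> U y /\ g y = g z.
Proof.
move=> oU dg d0 Uz; have [r r0 rU] := open_ball_norm oU Uz.
exists r => // y zy; split; first exact: rU.
have := @segment_cst U g z (y - z) dg (fun x Ux => d0 x _ Ux).
rewrite subrKC; apply => t tI; apply/rU/(ball_segment _ tI).
by rewrite subrr normr0 add0r distrC.
Qed.

Lemma diff0_open_level U g (P : R -> Prop) : open U ->
  (forall y, U y -> differentiable g y) -> (forall y w, U y -> 'd g y w = 0) ->
  open [set y | U y /\ P (g y)].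
Proof.
move=> oU dg d0; rewrite openE => z [Uz Pz].
have [r r0 rU] := diff0_locally_cst oU dg d0 Uz.
apply/nbhs_ballP; exists r => // y; rewrite -ball_normE /= => /rU[Uy ->].
by split.
Qed.

Lemma connected_diff0_cst U g : open U -> connected U ->
  (forall y, U y -> differentiable g y) -> (forall y w, U y -> 'd g y w = 0) ->
  exists c, forall z, U z -> g z = c.
Proof.
move=> oU cU dg d0.
have [[z0 Uz0]|U0] := pselect (exists z, U z); last first.
  by exists 0 => z Uz; case: U0; exists z.
exists (g z0); pose B := [set y | U y /\ g y = g z0].
suff BU : B = U by move=> z; rewrite -BU => -[].
apply: cU; first by exists z0.
  exists B; last by apply/seteqP; split => y [].
  exact: diff0_open_level (eq^~ (g z0)) oU dg d0.
exists (~` [set y | U y /\ g y <> g z0]).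
  exact/open_closedC/(diff0_open_level (fun c => c <> g z0) oU dg d0).
apply/seteqP; split => y; first by move=> [Uy gy]; split => // -[].
by move=> [Uy /= nB]; split => //; apply: contrapT => gy; apply: nB.
Qed.

End ConstantOnConnected.

Lemma triangular_comb_eq0 (R : nzRingType) (c0 : R) (c : nat -> R)
    (q : nat -> {poly R}) K :
  (forall j, (size (q j) <= j.+2)%N /\ (q j)`_j.+1 = 1) ->
  c0%:P + \sum_(0 <= j < K) c j *: q j = 0 ->
  c0 = 0 /\ forall j, (j < K)%N -> c j = 0.
Proof.
move=> q_top; elim: K => [|K IH].
  by rewrite big_geq // addr0 => /eqP; rewrite polyC_eq0 => /eqP.
rewrite big_nat_recr //= => comb0.
have cK : c K = 0.
  have := congr1 (fun p : {poly R} => p`_K.+1) comb0.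
  rewrite /= coefD coefC add0r coef0 coefD coef_sum coefZ (proj2 (q_top K)) mulr1.
  rewrite big1_seq ?add0r // => j; rewrite mem_index_iota => /andP[_ jK].
  by rewrite coefZ nth_default ?mulr0 // (leq_trans (proj1 (q_top j))).
move: comb0; rewrite cK scale0r addr0 => /IH[-> c0K]; split => // j.
by rewrite ltnS leq_eqVlt => /orP[/eqP -> | /c0K].
Qed.

Lemma poly_eq0_near0 (R : realFieldType) (P : {poly R}) (d : R) : 0 < d ->
  (forall s, `|s| < d -> P.[s] = 0) -> P = 0.
Proof.
move=> d0 P0; have sP1 : 0 < (size P)%:R + 1 :> R by rewrite ltr_wpDl.
pose e := d / ((size P)%:R + 1); have e0 : 0 < e by rewrite divr_gt0.
apply: (@roots_geq_poly_eq0 _ P (mkseq (fun i => i%:R * e) (size P))).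
- apply/allP => x /mapP[i]; rewrite mem_iota add0n => /andP[_ iP] ->.
  apply/rootP/P0; rewrite ger0_norm; last by rewrite mulr_ge0 // ltW.
  rewrite /e mulrA ltr_pdivrMr // [_ * d]mulrC ltr_pM2l //.
  by rewrite natr1 ltr_nat ltnS ltnW.
- apply: mkseq_uniq => i j /(mulIf (lt0r_neq0 e0)) /eqP.
  by rewrite eqr_nat => /eqP.
- by rewrite size_mkseq.
Qed.

Lemma size_big_nat_leq (R : nzSemiRingType) (F : nat -> {poly R}) a b m :
  (forall i, (a <= i < b)%N -> (size (F i) <= m)%N) ->
  (size (\sum_(a <= i < b) F i)%R <= m)%N.
Proof.
move=> Fm; rewrite big_nat_cond; elim/big_ind: _.
- by rewrite size_poly0.
- by move=> p q pm qm; rewrite (leq_trans (size_polyD _ _)) // geq_max pm.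
- by move=> i /andP[/Fm].
Qed.

Section SigmaPolynomials.
Variable R : comNzRingType.
Implicit Types (u v s : R) (ps : nat -> R).

Definition sigma_uv u v m : R := \sum_(0 <= i < m.+1) u ^+ i * v ^+ (m - i).

Definition X_uv u v ps J : R :=
  sigma_uv u v (J - 2)
  - \sum_(1 <= i < J - 2) (i%:R * sigma_uv u v (J - i - 3) * ps i).

Definition sigma_poly u v m : {poly R} :=
  \sum_(0 <= i < m.+1) ('X + u%:P) ^+ i * (v ^+ (m - i))%:P.

Definition X_poly u v ps J : {poly R} :=
  sigma_poly u v (J - 2)
  - \sum_(1 <= i < J - 2) ((i%:R * ps i)%:P * sigma_poly u v (J - i - 3)).

Lemma horner_sigma_poly u v m s : (sigma_poly u v m).[s] = sigma_uv (s + u) v m.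
Proof.
rewrite horner_sum; apply: eq_bigr => i _.
by rewrite hornerM hornerC horner_exp hornerD hornerX hornerC.
Qed.

Lemma horner_X_poly u v ps J s : (X_poly u v ps J).[s] = X_uv (s + u) v ps J.
Proof.
rewrite hornerD hornerN horner_sigma_poly horner_sum; congr (_ - _).
by apply: eq_bigr => i _; rewrite hornerM hornerC horner_sigma_poly mulrAC.
Qed.

Lemma size_XaddC_exp u i : size (('X + u%:P) ^+ i) = i.+1.
Proof. by rewrite -[u]opprK polyCN size_exp_XsubC. Qed.

Lemma sigma_poly_top u v m :
  (size (sigma_poly u v m) <= m.+1)%N /\ (sigma_poly u v m)`_m = 1.
Proof.
rewrite /sigma_poly big_nat_recr //= subnn expr0 mulr1.
set low := \sum_(0 <= i < m) _.
have low_m : (size low <= m)%N.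
  apply: size_big_nat_leq => i /andP[_ im].
  by rewrite mulrC mul_polyC (leq_trans (size_scale_leq _ _)) // size_XaddC_exp.
split.
  rewrite (leq_trans (size_polyD _ _)) // geq_max size_XaddC_exp leqnn andbT.
  exact: leq_trans low_m _.
rewrite coefD (nth_default _ low_m) add0r.
have /monicP : ('X + u%:P) ^+ m \is monic by rewrite monic_exp // monicXaddC.
by rewrite /lead_coef size_XaddC_exp.
Qed.

Lemma X_poly_top u v ps j :
  (size (X_poly u v ps (j + 3)) <= j.+2)%N /\ (X_poly u v ps (j + 3))`_j.+1 = 1.
Proof.
rewrite /X_poly (_ : (j + 3 - 2 = j.+1)%N); last by lia.
have [sig_size sig_top] := sigma_poly_top u v j.+1.
set low := \sum_(1 <= i < j.+1) _.
have low_j : (size low <= j.+1)%N.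
  apply: size_big_nat_leq => i /andP[i1 ij].
  rewrite mul_polyC (leq_trans (size_scale_leq _ _)) //.
  by apply: leq_trans (proj1 (sigma_poly_top _ _ _)) _; lia.
split; last by rewrite coefB sig_top (nth_default _ low_j) subr0.
rewrite (leq_trans (size_polyD _ _)) // geq_max sig_size size_polyN.
exact: leq_trans low_j _.
Qed.

End SigmaPolynomials.

Section JetCoordinates.
Variables (R : realType) (k N : nat).
Local Notation n := (ncoord k N).
Local Notation iu a := (2 + a)%N.
Local Notation iv a := (2 + N.+1 + a)%N.
Local Notation ipsi j := (j + (2 + N.+1 + N.+1))%N.

Local Ltac eval_eqn :=
  repeat match goal with
  | |- context [@eq_op _ ?x ?y] =>
      first [ rewrite (_ : (x == y) = false); last by lia
            | rewrite (_ : (x == y) = true); last by lia ]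
  end.

Definition rcoord (z : 'rV[R]_n) (i : nat) : R := z ord0 (inord i).
Definition runit (i : nat) : 'rV[R]_n := delta_mx ord0 (inord i).

Lemma rcoord_inj (z w : 'rV[R]_n) :
  (forall i, (i < n)%N -> rcoord z i = rcoord w i) -> z = w.
Proof.
by move=> zw; apply/rowP => i; have := zw _ (ltn_ord i); rewrite /rcoord inord_val.
Qed.

Lemma rcoordD z w i : rcoord (z + w) i = rcoord z i + rcoord w i.
Proof. by rewrite /rcoord mxE. Qed.

Lemma rcoordZ a z i : rcoord (a *: z) i = a * rcoord z i.
Proof. by rewrite /rcoord mxE. Qed.

Lemma rcoord_runit c i : (0 < c < n)%N -> rcoord (runit c) i = (i == c)%:R.
Proof.
move=> /andP[c_gt0 lt_c_n]; rewrite /rcoord /runit mxE eqxx /= -val_eqE /=.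
rewrite (@inordK _ c) //; have [lt_i_n|ge_i_n] := ltnP i n; first by rewrite inordK.
rewrite /inord val_insubd ifN; last by rewrite -leqNgt.
have -> : (i == c) = false by lia.
by case: eqP c_gt0 => // <-.
Qed.

Lemma rcoord_shift z s c i : (0 < c < n)%N -> i != c ->
  rcoord (z + s *: runit c) i = rcoord z i.
Proof.
by move=> c_n ic; rewrite rcoordD rcoordZ rcoord_runit // (negbTE ic) mulr0 addr0.
Qed.

Variant coord_spec (i : nat) : Prop :=
  | CoordX of i = 0%N
  | CoordY of i = 1%N
  | CoordU a of (a <= N)%N & i = iu a
  | CoordV a of (a <= N)%N & i = iv a
  | CoordPsi j of (j < k.-1)%N & i = ipsi j.

Lemma coordP i : (i < n)%N -> coord_spec i.
Proof.
rewrite /ncoord => lt_i_n.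
case: i lt_i_n => [|[|i]] lt_i_n; [exact: CoordX | exact: CoordY |].
have [iu_i|ge_i_u] := ltnP i N.+1; first by apply: (@CoordU _ i); lia.
have [iv_i|ge_i_v] := ltnP i (N.+1 + N.+1).
  by apply: (@CoordV _ (i - N.+1)); lia.
by apply: (@CoordPsi _ (i - (N.+1 + N.+1))); lia.
Qed.

Lemma rcoord_jproj (p : jet R) i :
  (i < n)%N -> rcoord (jproj k N p) i = Defs.coord k N p i.
Proof. by move=> lt_i_n; rewrite /rcoord /jproj mxE inordK. Qed.

Lemma rcoord_jproj_x p : rcoord (jproj k N p) 0 = jx p.
Proof. by rewrite rcoord_jproj. Qed.

Lemma rcoord_jproj_y p : rcoord (jproj k N p) 1 = jy p.
Proof. by rewrite rcoord_jproj. Qed.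

Lemma rcoord_jproj_u p a : (a <= N)%N -> rcoord (jproj k N p) (iu a) = ju p a.
Proof.
move=> aN; rewrite rcoord_jproj /Defs.coord; last by rewrite /ncoord; lia.
by rewrite ifT; [congr ju; lia | lia].
Qed.

Lemma rcoord_jproj_v p a : (a <= N)%N -> rcoord (jproj k N p) (iv a) = jv p a.
Proof.
move=> aN; rewrite rcoord_jproj /Defs.coord; last by rewrite /ncoord; lia.
by rewrite ifF ?ifT; [congr jv; lia | lia | lia].
Qed.

Lemma rcoord_jproj_psi p j :
  (j < k.-1)%N -> rcoord (jproj k N p) (ipsi j) = jpsi p (j + 3).
Proof.
move=> jk; rewrite rcoord_jproj /Defs.coord; last by rewrite /ncoord; lia.
by rewrite !ifF ?addnK //; lia.
Qed.

Definition row_jet (z : 'rV[R]_n) (a b : R) : jet R :=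
  mkJet (rcoord z 0) (rcoord z 1)
        (fun i => if (i <= N)%N then rcoord z (iu i) else a)
        (fun i => if (i <= N)%N then rcoord z (iv i) else b)
        (fun j => rcoord z (ipsi (j - 3))).

Lemma jproj_row_jet z a b : jproj k N (row_jet z a b) = z.
Proof.
apply: rcoord_inj => i /coordP[->|->|a' a'N ->|a' a'N ->|j jk ->].
- by rewrite rcoord_jproj_x.
- by rewrite rcoord_jproj_y.
- by rewrite rcoord_jproj_u //= a'N.
- by rewrite rcoord_jproj_v //= a'N.
- by rewrite rcoord_jproj_psi //= addnK.
Qed.

Lemma jproj_jline (p w : jet R) t :
  jproj k N (jline p w t) = jproj k N p + t *: jproj k N w.
Proof.
apply: rcoord_inj => i lt_i_n; rewrite rcoordD rcoordZ !rcoord_jproj //.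
by rewrite /Defs.coord /=; repeat case: ifP.
Qed.

Lemma vfield_jproj (W : jet R -> jet R) (g : 'rV[R]_n -> R) (p : jet R) :
  differentiable g (jproj k N p) ->
  vfield W (fun q => g (jproj k N q)) p = 'd g (jproj k N p) (jproj k N (W p)).
Proof.
move=> dg; rewrite /vfield derive1E.
under eq_fun do rewrite jproj_jline.
by rewrite derive_line scale0r addr0 deriveE.
Qed.

Definition Xrow (z : 'rV[R]_n) (a b : R) := jproj k N (Wxk k (row_jet z a b)).
Definition Yrow (z : 'rV[R]_n) := jproj k N (Wyk k (row_jet z 0 0)).

Lemma rcoord_Xrow_x z a b : rcoord (Xrow z a b) 0 = 1.
Proof. exact: rcoord_jproj_x. Qed.

Lemma rcoord_Xrow_y z a b : rcoord (Xrow z a b) 1 = 0.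
Proof. exact: rcoord_jproj_y. Qed.

Lemma rcoord_Xrow_psi z a b j : (j < k.-1)%N ->
  rcoord (Xrow z a b) (ipsi j) = Xc (j + 3) (row_jet z a b).
Proof. by move=> jk; rewrite rcoord_jproj_psi //= /in_psi_range ifT //; lia. Qed.

Lemma rcoord_Yrow_y z : rcoord (Yrow z) 1 = 1.
Proof. exact: rcoord_jproj_y. Qed.

Lemma XcE J (p : jet R) : Xc J p = X_uv (ju p 0) (jv p 0) (Defs.psi p) J.
Proof. by []. Qed.

Lemma row_jet_u0 z a b : ju (row_jet z a b) 0 = rcoord z (iu 0).
Proof. by []. Qed.

Lemma row_jet_v0 z a b : jv (row_jet z a b) 0 = rcoord z (iv 0).
Proof. by []. Qed.

Lemma psi_row_jet_shift z s c a b : (iu 0 <= c < iv N.+1)%N ->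
  Defs.psi (row_jet (z + s *: runit c) a b) = Defs.psi (row_jet z a b).
Proof.
move=> c_jet; apply: funext => i; rewrite /Defs.psi /=.
by case: ifP => _; [|case: ifP => _]; rewrite rcoord_shift //; rewrite /ncoord; lia.
Qed.

Lemma Xc_row_jet_shift J z s c : (iu 0 < c < iv N.+1)%N -> c != iv 0 ->
  Xc J (row_jet (z + s *: runit c) 0 0) = Xc J (row_jet z 0 0).
Proof.
move=> c_jet c_v0.
rewrite !XcE psi_row_jet_shift ?row_jet_u0 ?row_jet_v0; last by lia.
by rewrite !rcoord_shift //; rewrite /ncoord; lia.
Qed.

Lemma Xc_row_jet_shift_u0 J z s :
  Xc J (row_jet (z + s *: runit (iu 0)) 0 0) =
  X_uv (s + rcoord z (iu 0)) (rcoord z (iv 0)) (Defs.psi (row_jet z 0 0)) J.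
Proof.
have u0_n : (0 < iu 0 < n)%N by rewrite /ncoord; lia.
rewrite XcE psi_row_jet_shift ?row_jet_u0 ?row_jet_v0; last by lia.
by rewrite rcoordD rcoordZ rcoord_runit // eqxx mulr1 addrC rcoord_shift.
Qed.

Lemma rcoord_Xrow_u z a b i : (i <= N)%N ->
  rcoord (Xrow z a b) (iu i) = if (i < N)%N then rcoord z (iu i.+1) else a.
Proof. by move=> iN; rewrite rcoord_jproj_u. Qed.

Lemma rcoord_Xrow_v z a b i : (i <= N)%N ->
  rcoord (Xrow z a b) (iv i) = if (i < N)%N then rcoord z (iv i.+1) else b.
Proof. by move=> iN; rewrite rcoord_jproj_v. Qed.

Lemma Xrow_top z a b :
  Xrow z a b = Xrow z 0 0 + a *: runit (iu N) + b *: runit (iv N).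
Proof.
have uN : (0 < iu N < n)%N by rewrite /ncoord; lia.
have vN : (0 < iv N < n)%N by rewrite /ncoord; lia.
apply: rcoord_inj => i /coordP[->|->|i' i'N ->|i' i'N ->|j jk ->];
  rewrite !rcoordD !rcoordZ !rcoord_runit //.
- by rewrite !rcoord_Xrow_x !mulr0 !addr0.
- by rewrite !rcoord_Xrow_y !mulr0 !addr0.
- rewrite !rcoord_Xrow_u //; case: ltnP => i'N'; eval_eqn;
  by rewrite ?mulr0n ?mulr1n ?mulr0 ?mulr1 ?addr0 ?add0r.
- rewrite !rcoord_Xrow_v //; case: ltnP => i'N'; eval_eqn;
  by rewrite ?mulr0n ?mulr1n ?mulr0 ?mulr1 ?addr0 ?add0r.
- by rewrite !rcoord_Xrow_psi //; eval_eqn; rewrite !mulr0n !mulr0 !addr0.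
Qed.

Lemma Xrow_shift z s c :
  (iu 0 <= c)%N -> (c.+1 < iv N.+1)%N -> c.+1 != iv 0 ->
  Xrow (z + s *: runit c.+1) 0 0 = Xrow z 0 0 + s *: runit c.
Proof.
move=> c2 cM cv0; have cn : (0 < c < n)%N by rewrite /ncoord; lia.
have c1n : (0 < c.+1 < n)%N by rewrite /ncoord; lia.
apply: rcoord_inj => i /coordP[->|->|i' i'N ->|i' i'N ->|j jk ->];
  rewrite rcoordD rcoordZ rcoord_runit //.
- by rewrite !rcoord_Xrow_x; eval_eqn; rewrite mulr0n mulr0 addr0.
- by rewrite !rcoord_Xrow_y; eval_eqn; rewrite mulr0n mulr0 addr0.
- rewrite !rcoord_Xrow_u //; case: ltnP => i'N'; eval_eqn.
    by rewrite rcoordD rcoordZ rcoord_runit // addnS eqSS.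
  by rewrite mulr0n mulr0 addr0.
- rewrite !rcoord_Xrow_v //; case: ltnP => i'N'; eval_eqn.
    by rewrite rcoordD rcoordZ rcoord_runit // addnS eqSS.
  by rewrite mulr0n mulr0 addr0.
- rewrite !rcoord_Xrow_psi // Xc_row_jet_shift //; last by lia.
  by eval_eqn; rewrite mulr0n mulr0 addr0.
Qed.

Lemma diff_row_sum (g : 'rV[R]_n -> R) z w :
  'd g z w = \sum_(0 <= i < n) rcoord w i * 'd g z (runit i).
Proof.
rewrite {1}(row_sum_delta w) linear_sum big_mkord; apply: eq_bigr => i _.
by rewrite linearZ /= /rcoord /runit inord_val.
Qed.

Lemma diff_row_sum_xypsi (g : 'rV[R]_n -> R) z w :
  (forall i, (iu 0 <= i < iv N.+1)%N -> 'd g z (runit i) = 0) ->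
  'd g z w = rcoord w 0 * 'd g z (runit 0) + rcoord w 1 * 'd g z (runit 1)
    + \sum_(0 <= j < k.-1) rcoord w (ipsi j) * 'd g z (runit (ipsi j)).
Proof.
move=> jets0.
have uv0 : \sum_(iu 0 <= i < iv N.+1) rcoord w i * 'd g z (runit i) = 0.
  by rewrite big_nat_cond big1 // => i /andP[/jets0 -> _]; rewrite mulr0.
rewrite diff_row_sum (@big_cat_nat _ _ _ (iv N.+1)) /=; [|lia|by rewrite /ncoord; lia].
rewrite (@big_cat_nat _ _ _ (iu 0)) //= uv0 addr0 big_ltn // big_nat1.
congr (_ + _); rewrite -{1}[iv N.+1]add0n big_addn.
by rewrite (_ : n - iv N.+1 = k.-1)%N //; rewrite /ncoord; lia.
Qed.

Section InvariantFunctions.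
Variables (U : set 'rV[R]_n) (g : 'rV[R]_n -> R).
Hypotheses (oU : open U) (dg : forall z, U z -> differentiable g z).
Hypothesis gX :
  forall p : jet R, U (jproj k N p) -> Dxk k (fun q => g (jproj k N q)) p = 0.
Hypothesis gY :
  forall p : jet R, U (jproj k N p) -> Dyk k (fun q => g (jproj k N q)) p = 0.

Lemma diff_Xrow z a b : U z -> 'd g z (Xrow z a b) = 0.
Proof.
move=> Uz; have := @gX (row_jet z a b).
by rewrite /Dxk vfield_jproj jproj_row_jet //; [apply | apply: dg].
Qed.

Lemma diff_Yrow z : U z -> 'd g z (Yrow z) = 0.
Proof.
move=> Uz; have := @gY (row_jet z 0 0).
by rewrite /Dyk vfield_jproj jproj_row_jet //; [apply | apply: dg].
Qed.

Lemma diff_top_jets z :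
  U z -> 'd g z (runit (iu N)) = 0 /\ 'd g z (runit (iv N)) = 0.
Proof.
move=> Uz; have := diff_Xrow 1 0 Uz; have := diff_Xrow 0 1 Uz.
rewrite [Xrow z 0 1]Xrow_top [Xrow z 1 0]Xrow_top !linearD !linearZ /=.
by rewrite diff_Xrow // !scale0r !scale1r !add0r !addr0 => -> ->.
Qed.

Lemma diff_lower_jet c :
  (iu 0 <= c)%N -> (c.+1 < iv N.+1)%N -> c.+1 != iv 0 ->
  (forall y, U y -> 'd g y (runit c.+1) = 0) ->
  forall z, U z -> 'd g z (runit c) = 0.
Proof.
move=> c2 cM cv0 dc z Uz.
have [d d0 near_z] := diff_dir0_shift_invariant oU dg dc Uz.
have d20 : 0 < d / 2 by rewrite divr_gt0.
have [Uzs gs] : U (z + d / 2 *: runit c.+1) /\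
    \forall y \near z, g (y + d / 2 *: runit c.+1) = g y.
  by apply: near_z; rewrite gtr0_norm // ltr_pdivrMr // ltr_pMr // ltr1n.
have := diff_Xrow 0 0 Uzs; rewrite Xrow_shift //.
move/(etrans (esym (shift_invariant_diff _ (dg Uz) (dg Uzs) gs))).
rewrite linearD linearZ /= diff_Xrow // add0r => /eqP.
by rewrite scaler_eq0 gt_eqF //= => /eqP.
Qed.

Lemma diff_jets_from_top o : o = 2%N \/ o = (2 + N.+1)%N ->
  (forall z, U z -> 'd g z (runit (o + N)) = 0) ->
  forall a z, (a <= N)%N -> U z -> 'd g z (runit (o + a)) = 0.
Proof.
move=> o_jet top0 a z aN; rewrite -(subKn aN); move: z.
elim: (N - a)%N (leq_subr a N) => [|r IH] rN; first by rewrite subn0.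
apply: (diff_lower_jet (c := (o + (N - r.+1))%N)); try lia.
by rewrite -addnS -subSn // subSS; apply: IH; lia.
Qed.

Lemma diff_jets0 z i : U z -> (iu 0 <= i < iv N.+1)%N -> 'd g z (runit i) = 0.
Proof.
move=> Uz i_jet; have [i_u|i_v] := ltnP i (iv 0).
  have -> : i = iu (i - 2) by lia.
  apply: (diff_jets_from_top (or_introl erefl)) => //; last by lia.
  by move=> y /diff_top_jets[].
have -> : i = iv (i - iv 0) by lia.
apply: (diff_jets_from_top (or_intror erefl)) => //; last by lia.
by move=> y /diff_top_jets[].
Qed.

Lemma diff_x_psi0 z : U z -> 'd g z (runit 0) = 0 /\
  forall j, (j < k.-1)%N -> 'd g z (runit (ipsi j)) = 0.
Proof.
move=> Uz.
have u0 y : U y -> 'd g y (runit (iu 0)) = 0 by move/diff_jets0; apply; lia.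
have [d d0 near_z] := diff_dir0_shift_invariant oU dg u0 Uz.
pose q j :=
  X_poly (rcoord z (iu 0)) (rcoord z (iv 0)) (Defs.psi (row_jet z 0 0)) (j + 3).
apply: (triangular_comb_eq0 (q := q)) => [j|]; first exact: X_poly_top.
apply: (poly_eq0_near0 d0) => s /near_z[Uzs gs].
have := diff_Xrow 0 0 Uzs.
move/(etrans (esym (shift_invariant_diff _ (dg Uz) (dg Uzs) gs))) => <-.
rewrite [RHS](diff_row_sum_xypsi _ (fun i => diff_jets0 Uz)).
rewrite rcoord_Xrow_x rcoord_Xrow_y mul0r addr0 mul1r hornerD hornerC horner_sum.
congr (_ + _).
apply: eq_big_nat => j jk; rewrite hornerZ horner_X_poly rcoord_Xrow_psi //.
by rewrite Xc_row_jet_shift_u0 mulrC.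
Qed.

Lemma diff_along_y z w : U z -> 'd g z w = rcoord w 1 * 'd g z (runit 1).
Proof.
move=> Uz; have [x0 psi0] := diff_x_psi0 Uz.
rewrite (diff_row_sum_xypsi _ (fun i => diff_jets0 Uz)) x0 mulr0 add0r.
by rewrite big_nat big1 ?addr0 // => j /andP[_ /psi0 ->]; rewrite mulr0.
Qed.

Lemma diff_eq0 z w : U z -> 'd g z w = 0.
Proof.
move=> Uz; have := diff_Yrow Uz.
rewrite (diff_along_y _ Uz) rcoord_Yrow_y mul1r => y0.
by rewrite (diff_along_y _ Uz) y0 mulr0.
Qed.

End InvariantFunctions.
End JetCoordinates.

Theorem mainTheorem6 (R : realType) (k N : nat) (hk : (2 <= k)%N)
    (U : set 'rV[R]_(ncoord k N)) (g : 'rV[R]_(ncoord k N) -> R) :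
  open U -> connected U ->
  (forall z, U z -> u0_of k N z != v0_of k N z) ->
  smooth_on U g ->
  (forall p : jet R, U (jproj k N p) ->
      Dxk k (fun q => g (jproj k N q)) p = 0) ->
  (forall p : jet R, U (jproj k N p) ->
      Dyk k (fun q => g (jproj k N q)) p = 0) ->
  exists c : R, forall z, U z -> g z = c.
Proof.
move=> oU cU _ g_smooth gX gY.
have dg z : U z -> differentiable g z := g_smooth [::] z.
exact: connected_diff0_cst oU cU dg (fun z w => diff_eq0 oU dg gX gY w).
Qed.
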